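(* Let $0\le t_1<t_2<+\infty$, $r:=\frac{t_2-t_1}2$, $x_0:=\frac{t_1+t_2}2$. For all $z$ with $\operatorname{Im}z\ge0$: $\omega(z,[t_1,t_2])\le1$ if $z\in D(x_0,r)\cup\{t_1,t_2\}$; $\omega(z,[t_1,t_2])\le\frac12$ if $\operatorname{Im}z>0$ and $|z-x_0|=r$; and $\omega(z,[t_1,t_2])\le\frac1\pi\arctan\frac{2r|z-x_0|}{|z-x_0|^2-r^2}$ if $|z-x_0|>r$. These bounds are sharp on each semicircle: for every $t\ge0$ there is a point $z$ with $\operatorname{Im}z\ge0$, $|z-x_0|=t$, at which equality holds in the applicable bound. Moreover, for all $z$ with $\operatorname{Im}z>0$ and $|z-x_0|<r$, $$\omega(z,[t_1,t_2])\ge1-\frac1\pi\arctan\frac{2r|z-x_0|}{r^2-|z-x_0|^2}\ge1-\frac1\pi\frac{2r|z-x_0|}{r^2-|z-x_0|^2}.$$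
   Context: For $z$ with $\operatorname{Im}z>0$ and Borel $B\subset\mathbb{R}$, $\omega(z,B)=\frac1\pi\int_B\frac{\operatorname{Im}z}{(t-\operatorname{Re}z)^2+(\operatorname{Im}z)^2}dt$ is the harmonic measure of the upper half-plane; for $x\in\mathbb{R}$, $\omega(x,B)$ is the Dirac measure $\delta_x(B)$. $D(x_0,r)$ is the open disc of centre $x_0$ and radius $r$. *)

From Stdlib Require Import Reals Lra.
From Coquelicot Require Import Coquelicot.
Open Scope R_scope.

(* Points z of the closed upper half-plane are represented by z = x + i y
   with y >= 0.  Harmonic measure of the upper half-plane of the interval
   [a,b] seen from z:
   - if Im z = y > 0 : (1/pi) * int_a^b y / ((t - x)^2 + y^2) dt
     (Poisson integral; the integrand is continuous on [a,b], so the
      Riemann integral RInt coincides with the Lebesgue integral);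
   - if Im z = y = 0 : the Dirac measure delta_x([a,b]).
   (Values for y < 0 are never used.) *)
Definition omega_int (x y a b : R) : R :=
  if Rlt_dec 0 y then
    / PI * RInt (fun t => y / ((t - x) ^ 2 + y ^ 2)) a b
  else if Rle_dec a x then (if Rle_dec x b then 1 else 0) else 0.

Definition cmod_shift (x y x0 : R) : R := sqrt ((x - x0) ^ 2 + y ^ 2).

From Stdlib Require Import Reals Lra.
From Coquelicot Require Import Coquelicot.
Open Scope R_scope.

(* For Im z = y > 0, pi * omega(z, [t1, t2]) is the angle under which [t1, t2]
   is seen from z, namely atan ((t2 - x) / y) + atan ((x - t1) / y).  The two
   slopes have sum 2r/y and product 1 - (|z - x0|^2 - r^2) / y^2, so the
   addition formula for atan shows that this angle has tangent
   2ry / (|z - x0|^2 - r^2): it is acute, right or obtuse according as z lies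
   outside, on or inside the circle |z - x0| = r.  Replacing y by the larger
   |z - x0| gives the bounds, with equality on the vertical line through x0;
   inside the disc, equality holds on the real axis, where omega is a Dirac
   mass. *)

Lemma atan_le u v : u <= v -> atan u <= atan v.
Proof. intros [Huv | ->]; [left; apply atan_increasing|]; lra. Qed.

Lemma atan_ge_0 u : 0 <= u -> 0 <= atan u.
Proof. intros Hu. rewrite <- atan_0. now apply atan_le. Qed.

Lemma atan_le_id u : 0 <= u -> atan u <= u.
Proof.
intros [Hu | <-]; [|rewrite atan_0; lra].
destruct (MVT_cor1 atan 0 u derivable_pt_atan) as [v [Hmvt _]]; [lra|].
rewrite derive_pt_atan, atan_0 in Hmvt.
assert (Hslope : / (1 + v²) <= 1).
{ rewrite <- Rinv_1. apply Rinv_le_contravar; [lra|]. pose proof (Rle_0_sqr v). lra. }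
unfold Rdiv in Hmvt. nra.
Qed.

Lemma atan_add_lt_PI2 u v : u * v < 1 -> atan u + atan v < PI / 2.
Proof.
intros Huv. pose proof (atan_bound v) as Hv.
destruct (Rlt_le_dec 0 u) as [Hu|Hu].
- assert (Hvu : v < / u).
  { apply (Rmult_lt_reg_l u); [lra|]. rewrite Rinv_r; lra. }
  pose proof (atan_increasing _ _ Hvu). rewrite atan_inv in *; lra.
- pose proof (atan_le _ _ Hu). rewrite atan_0 in *. lra.
Qed.

Lemma atan_add u v : u * v < 1 -> atan u + atan v = atan ((u + v) / (1 - u * v)).
Proof.
intros Huv.
pose proof (atan_add_lt_PI2 u v Huv) as Hlt.
assert (Hgt : atan (- u) + atan (- v) < PI / 2) by (apply atan_add_lt_PI2; lra).
rewrite !atan_opp in Hgt.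
pose proof (atan_bound u) as Hu. pose proof (atan_bound v) as Hv.
assert (Hcos : forall w, - (PI / 2) < w < PI / 2 -> cos w <> 0).
{ intros w Hw. apply Rgt_not_eq, cos_gt_0; lra. }
rewrite <- (atan_tan (atan u + atan v)) by lra.
f_equal. rewrite tan_plus; [now rewrite !tan_atan | apply Hcos; lra .. | rewrite !tan_atan; lra].
Qed.

Lemma atan_add_eq_PI2 u v : 0 < u -> u * v = 1 -> atan u + atan v = PI / 2.
Proof.
intros Hu Huv. replace v with (/ u) by (field_simplify_eq; lra).
rewrite atan_inv; lra.
Qed.

Lemma atan_add_gt1 u v : 0 < u -> 0 < v -> 1 < u * v ->
  atan u + atan v = PI - atan ((u + v) / (u * v - 1)).
Proof.
intros Hu Hv Huv.
assert (Hinv : atan (/ u) + atan (/ v) = atan ((u + v) / (u * v - 1))).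
{ rewrite atan_add.
  - f_equal. field. repeat split; nra.
  - rewrite <- Rinv_mult. apply (Rmult_lt_reg_l (u * v)); [lra|]. rewrite Rinv_r; lra. }
rewrite !atan_inv in Hinv by lra. lra.
Qed.

Lemma is_derive_atan_affine x y t : 0 < y ->
  is_derive (fun t => atan ((t - x) / y)) t (y / ((t - x) ^ 2 + y ^ 2)).
Proof.
intros Hy. pose proof (pow2_ge_0 (t - x)).
replace (y / ((t - x) ^ 2 + y ^ 2)) with (/ y * / (1 + ((t - x) / y)²)).
- apply (is_derive_comp atan (fun t => (t - x) / y)).
  + apply is_derive_atan.
  + auto_derive; [easy | field; lra].
- unfold Rsqr. field. split; nra.
Qed.

Lemma is_RInt_poisson x y a b : 0 < y ->
  is_RInt (fun t => y / ((t - x) ^ 2 + y ^ 2)) a b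
    (atan ((b - x) / y) - atan ((a - x) / y)).
Proof.
intros Hy.
apply (is_RInt_derive (fun t => atan ((t - x) / y))).
- intros t _. now apply is_derive_atan_affine.
- intros t _. apply (ex_derive_continuous (fun t => y / ((t - x) ^ 2 + y ^ 2))).
  auto_derive. pose proof (pow2_ge_0 (t - x)). nra.
Qed.

Lemma omega_int_angle x y a b : 0 < y ->
  omega_int x y a b = / PI * (atan ((b - x) / y) + atan ((x - a) / y)).
Proof.
intros Hy. unfold omega_int. destruct (Rlt_dec 0 y); [|lra].
rewrite (is_RInt_unique _ _ _ _ (is_RInt_poisson x y a b Hy)).
replace ((a - x) / y) with (- ((x - a) / y)) by (field; lra).
rewrite atan_opp. ring.
Qed.

Lemma omega_int_axis_in x a b : a <= x <= b -> omega_int x 0 a b = 1.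
Proof.
intros Hx. unfold omega_int.
destruct (Rlt_dec 0 0); [lra|].
destruct (Rle_dec a x); [destruct (Rle_dec x b)|]; lra.
Qed.

Lemma omega_int_axis_out x a b : x < a \/ b < x -> omega_int x 0 a b = 0.
Proof.
intros Hx. unfold omega_int.
destruct (Rlt_dec 0 0); [lra|].
destruct (Rle_dec a x); [destruct (Rle_dec x b)|]; lra.
Qed.

Lemma omega_int_le_1 x y a b : 0 <= y -> omega_int x y a b <= 1.
Proof.
intros [Hy | <-].
- rewrite omega_int_angle by exact Hy.
  pose proof (atan_bound ((b - x) / y)). pose proof (atan_bound ((x - a) / y)).
  pose proof PI_RGT_0.
  apply (Rmult_le_reg_l PI); [lra|].
  rewrite <- Rmult_assoc, Rinv_r; lra.
- destruct (Rle_dec a x); [destruct (Rle_dec x b)|].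
  + rewrite omega_int_axis_in; lra.
  + rewrite omega_int_axis_out; lra.
  + rewrite omega_int_axis_out; lra.
Qed.

Lemma cmod_shift_sq x y c : cmod_shift x y c ^ 2 = (x - c) ^ 2 + y ^ 2.
Proof.
unfold cmod_shift. apply pow2_sqrt.
pose proof (pow2_ge_0 (x - c)). pose proof (pow2_ge_0 y). lra.
Qed.

Lemma cmod_shift_ge_0 x y c : 0 <= cmod_shift x y c.
Proof. apply sqrt_pos. Qed.

Lemma cmod_shift_ge_im x y c : 0 <= y -> y <= cmod_shift x y c.
Proof.
intros Hy. pose proof (cmod_shift_sq x y c). pose proof (cmod_shift_ge_0 x y c).
pose proof (pow2_ge_0 (x - c)). nra.
Qed.

Lemma cmod_shift_horizontal c t : 0 <= t -> cmod_shift (c + t) 0 c = t.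
Proof.
intros Ht. unfold cmod_shift. replace ((c + t - c) ^ 2 + 0 ^ 2) with (t ^ 2) by ring.
now apply sqrt_pow2.
Qed.

Lemma cmod_shift_vertical c y : 0 <= y -> cmod_shift c y c = y.
Proof.
intros Hy. unfold cmod_shift. replace ((c - c) ^ 2 + y ^ 2) with (y ^ 2) by ring.
now apply sqrt_pow2.
Qed.

Section SymmetricInterval.

Variables c r x y : R.
Hypothesis r_pos : 0 < r.
Hypothesis y_pos : 0 < y.

Let slopes_add : (c + r - x) / y + (x - (c - r)) / y = 2 * r / y.
Proof. field. lra. Qed.

Let slopes_mul : (c + r - x) / y * ((x - (c - r)) / y) =
  1 - (cmod_shift x y c ^ 2 - r ^ 2) / y ^ 2.
Proof. rewrite cmod_shift_sq. field. lra. Qed.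

Lemma omega_int_outside : r < cmod_shift x y c ->
  omega_int x y (c - r) (c + r) =
    / PI * atan (2 * r * y / (cmod_shift x y c ^ 2 - r ^ 2)).
Proof.
intros Hout. pose proof (cmod_shift_ge_0 x y c).
assert (Hd : 0 < (cmod_shift x y c ^ 2 - r ^ 2) / y ^ 2)
  by (apply Rdiv_lt_0_compat; nra).
rewrite omega_int_angle by lra. rewrite atan_add by (rewrite slopes_mul; lra).
rewrite slopes_add, slopes_mul. do 2 f_equal. field. split; nra.
Qed.

Lemma omega_int_on_circle : cmod_shift x y c = r ->
  omega_int x y (c - r) (c + r) = 1 / 2.
Proof.
intros Hon.
assert (Hsum_pos : 0 < (c + r - x) / y + (x - (c - r)) / y)
  by (rewrite slopes_add; apply Rdiv_lt_0_compat; lra).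
assert (Hprod : (c + r - x) / y * ((x - (c - r)) / y) = 1)
  by (rewrite slopes_mul, Hon; field; lra).
rewrite omega_int_angle, atan_add_eq_PI2 by (assumption || nra).
pose proof PI_RGT_0. field. lra.
Qed.

Lemma omega_int_inside : cmod_shift x y c < r ->
  omega_int x y (c - r) (c + r) =
    1 - / PI * atan (2 * r * y / (r ^ 2 - cmod_shift x y c ^ 2)).
Proof.
intros Hin. pose proof (cmod_shift_ge_0 x y c).
assert (Hsum_pos : 0 < (c + r - x) / y + (x - (c - r)) / y)
  by (rewrite slopes_add; apply Rdiv_lt_0_compat; lra).
assert (Hprod : 1 < (c + r - x) / y * ((x - (c - r)) / y)).
{ rewrite slopes_mul. enough ((cmod_shift x y c ^ 2 - r ^ 2) / y ^ 2 < 0) by lra.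
  apply Rdiv_neg_pos; nra. }
rewrite omega_int_angle, atan_add_gt1 by (assumption || nra).
rewrite slopes_add, slopes_mul.
replace (2 * r / y / (1 - (cmod_shift x y c ^ 2 - r ^ 2) / y ^ 2 - 1))
  with (2 * r * y / (r ^ 2 - cmod_shift x y c ^ 2)) by (field; split; nra).
pose proof PI_RGT_0. field. lra.
Qed.

End SymmetricInterval.

Lemma omega_int_le_outside c r x y : 0 < r -> 0 <= y -> r < cmod_shift x y c ->
  omega_int x y (c - r) (c + r) <=
    / PI * atan (2 * r * cmod_shift x y c / (cmod_shift x y c ^ 2 - r ^ 2)).
Proof.
intros Hr Hy Hout.
pose proof (cmod_shift_ge_im x y c Hy) as Hyz.
assert (Hd : 0 < cmod_shift x y c ^ 2 - r ^ 2) by nra.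
pose proof (Rinv_0_lt_compat _ PI_RGT_0) as Hpi.
destruct Hy as [Hy | <-].
- rewrite omega_int_outside by assumption.
  apply Rmult_le_compat_l, atan_le; [lra|].
  apply Rmult_le_compat_r; [apply Rlt_le, Rinv_0_lt_compat|]; nra.
- assert (Hx : x < c - r \/ c + r < x).
  { rewrite cmod_shift_sq in Hd.
    destruct (Rlt_le_dec x (c - r)); [left | right]; nra. }
  rewrite omega_int_axis_out by exact Hx.
  apply Rmult_le_pos, atan_ge_0; [lra|].
  apply Rdiv_le_0_compat; nra.
Qed.

Lemma omega_int_ge_inside c r x y : 0 < r -> 0 < y -> cmod_shift x y c < r ->
  1 - / PI * atan (2 * r * cmod_shift x y c / (r ^ 2 - cmod_shift x y c ^ 2))
    <= omega_int x y (c - r) (c + r).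
Proof.
intros Hr Hy Hin.
pose proof (cmod_shift_ge_im x y c (Rlt_le _ _ Hy)) as Hyz.
assert (Hd : 0 < r ^ 2 - cmod_shift x y c ^ 2) by nra.
pose proof (Rinv_0_lt_compat _ PI_RGT_0) as Hpi.
rewrite omega_int_inside by assumption.
apply Rplus_le_compat_l, Ropp_le_contravar, Rmult_le_compat_l, atan_le; [lra|].
apply Rmult_le_compat_r; [apply Rlt_le, Rinv_0_lt_compat|]; nra.
Qed.

Theorem proposition9 (t1 t2 : R) (h1 : 0 <= t1) (h12 : t1 < t2) :
  let r := (t2 - t1) / 2 in
  let x0 := (t1 + t2) / 2 in
  (* upper bounds, for all z = x + i y with y >= 0 *)
  (forall x y : R, 0 <= y ->
     ((cmod_shift x y x0 < r \/ (x = t1 /\ y = 0) \/ (x = t2 /\ y = 0)) ->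
        omega_int x y t1 t2 <= 1) /\
     ((0 < y /\ cmod_shift x y x0 = r) ->
        omega_int x y t1 t2 <= 1 / 2) /\
     (r < cmod_shift x y x0 ->
        omega_int x y t1 t2 <=
          / PI * atan (2 * r * cmod_shift x y x0 / (cmod_shift x y x0 ^ 2 - r ^ 2)))) /\
  (* sharpness on every semicircle |z - x0| = t *)
  (forall t : R, 0 <= t ->
     exists x y : R, 0 <= y /\ cmod_shift x y x0 = t /\
       (((cmod_shift x y x0 < r \/ (x = t1 /\ y = 0) \/ (x = t2 /\ y = 0)) /\
            omega_int x y t1 t2 = 1) \/
        ((0 < y /\ cmod_shift x y x0 = r) /\ omega_int x y t1 t2 = 1 / 2) \/
        (r < cmod_shift x y x0 /\
            omega_int x y t1 t2 =
              / PI * atan (2 * r * cmod_shift x y x0 / (cmod_shift x y x0 ^ 2 - r ^ 2))))) /\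
  (* lower bounds inside the disc *)
  (forall x y : R, 0 < y -> cmod_shift x y x0 < r ->
     1 - / PI * atan (2 * r * cmod_shift x y x0 / (r ^ 2 - cmod_shift x y x0 ^ 2))
       <= omega_int x y t1 t2 /\
     1 - / PI * (2 * r * cmod_shift x y x0 / (r ^ 2 - cmod_shift x y x0 ^ 2))
       <= 1 - / PI * atan (2 * r * cmod_shift x y x0 / (r ^ 2 - cmod_shift x y x0 ^ 2))).
Proof.
intros r x0.
assert (Hr : 0 < r) by (unfold r; lra).
assert (Ht1 : t1 = x0 - r) by (unfold x0, r; field).
assert (Ht2 : t2 = x0 + r) by (unfold x0, r; field).
clearbody r x0. subst t1 t2.
split; [|split].
- intros x y Hy. split; [|split].
  + intros _. now apply omega_int_le_1.
  + intros [Hy' Hon]. rewrite omega_int_on_circle; lra.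
  + now apply omega_int_le_outside.
- intros t Ht. destruct (Rtotal_order t r) as [Htr | [-> | Htr]].
  + exists (x0 + t), 0. rewrite cmod_shift_horizontal by exact Ht.
    split; [lra | split; [reflexivity | left]].
    split; [now left | apply omega_int_axis_in; lra].
  + exists x0, r. rewrite cmod_shift_vertical by lra.
    split; [lra | split; [reflexivity | right; left]].
    split; [lra | apply omega_int_on_circle; [lra | lra | apply cmod_shift_vertical; lra]].
  + exists x0, t. rewrite cmod_shift_vertical by exact Ht.
    split; [exact Ht | split; [reflexivity | right; right]].
    split; [exact Htr|].
    rewrite omega_int_outside by (rewrite ?cmod_shift_vertical; lra).
    now rewrite cmod_shift_vertical by lra.
- intros x y Hy Hin. split.
  + now apply omega_int_ge_inside.
  + pose proof (cmod_shift_ge_0 x y x0).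
    apply Rplus_le_compat_l, Ropp_le_contravar, Rmult_le_compat_l, atan_le_id.
    * apply Rlt_le, Rinv_0_lt_compat, PI_RGT_0.
    * apply Rdiv_le_0_compat; nra.
Qed.
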